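(* For all real $s\ge 3$, $\log\zeta(s)\le 2^{1-s}$, where $\zeta$ is the Riemann zeta-function and $\log$ the natural logarithm. *)

From Stdlib Require Import Reals.
From Coquelicot Require Import Coquelicot.
Open Scope R_scope.

(* Riemann zeta function on real s > 1, via its Dirichlet series
   zeta(s) = sum_{n>=1} n^{-s}.  (Coquelicot's [Series] is total; for s > 1
   the series converges, so this is the genuine zeta value.) *)
Definition zeta (s : R) : R :=
  Series (fun n : nat => / Rpower (INR (S n)) s).

(* For n >= 2 and s >= 3 we have n^-s <= 2^(3-s) n^-3 <= 2^(3-s) / ((n-1) n (n+1)), and
   2 / ((n-1) n (n+1)) = 1/((n-1) n) - 1/(n (n+1)) telescopes to 1/2 over n >= 2.
   Hence zeta(s) <= 1 + 2^(1-s), and ln(1 + y) <= y. *)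

From Stdlib Require Import Reals Lra.
From Coquelicot Require Import Coquelicot.
Open Scope R_scope.

Lemma Rpower_gt_0 (a b : R) : 0 < Rpower a b.
Proof. exact (exp_pos _). Qed.

Lemma Rpower_1_l (s : R) : Rpower 1 s = 1.
Proof. now unfold Rpower; rewrite ln_1, Rmult_0_r, exp_0. Qed.

Lemma Rpower_mul_le_swap (a k t s : R) : 0 < a <= k -> t <= s ->
  Rpower a s * Rpower k t <= Rpower a t * Rpower k s.
Proof.
  intros hak hts.
  replace s with (t + (s - t)) by ring.
  rewrite !Rpower_plus.
  assert (Rpower a (s - t) <= Rpower k (s - t)) by (apply Rle_Rpower_l; lra).
  assert (0 < Rpower a t * Rpower k t)
    by (apply Rmult_lt_0_compat; apply Rpower_gt_0).
  nra.
Qed.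

Lemma inv_Rpower_le_telescope (s k : R) : 3 <= s -> 2 <= k ->
  / Rpower k s <= 4 / Rpower 2 s * (/ ((k - 1) * k) - / (k * (k + 1))).
Proof.
  intros hs hk.
  pose proof (Rpower_gt_0 2 s); pose proof (Rpower_gt_0 k s).
  set (P := (k - 1) * k * (k + 1)).
  assert (hP : 0 < P) by (unfold P; apply Rmult_lt_0_compat; [apply Rmult_lt_0_compat|]; lra).
  assert (hPk : P <= k ^ 3) by (unfold P; nra).
  assert (hcube : Rpower 2 s * k ^ 3 <= 8 * Rpower k s).
  { rewrite <- (Rpower_pow 3 k) by lra.
    replace 8 with (Rpower 2 (INR 3)) by (rewrite Rpower_pow by lra; simpl; ring).
    apply Rpower_mul_le_swap; simpl; lra. }
  replace (4 / Rpower 2 s * (/ ((k - 1) * k) - / (k * (k + 1))))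
    with (8 / (Rpower 2 s * P)) by (unfold P; field; repeat split; lra).
  replace (/ Rpower k s) with (8 / (8 * Rpower k s)) by (field; lra).
  apply Rmult_le_compat_l; [lra|].
  apply Rinv_le_contravar; [apply Rmult_lt_0_compat; lra|].
  apply (Rle_trans _ (Rpower 2 s * k ^ 3)); [apply Rmult_le_compat_l|]; lra.
Qed.

Lemma zeta_partial_sum_le (s : R) (N : nat) : 3 <= s ->
  sum_n (fun n => / Rpower (INR (S n)) s) N <=
  1 + 2 / Rpower 2 s - 4 / Rpower 2 s / ((INR N + 1) * (INR N + 2)).
Proof.
  intros hs.
  pose proof (Rpower_gt_0 2 s).
  induction N as [|N IH].
  - rewrite sum_O; simpl INR.
    rewrite Rpower_1_l.
    replace (4 / Rpower 2 s / ((0 + 1) * (0 + 2))) with (2 / Rpower 2 s) by (field; lra).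
    lra.
  - rewrite sum_Sn; change plus with Rplus.
    pose proof (inv_Rpower_le_telescope s (INR N + 2) hs ltac:(pose proof (pos_INR N); lra)).
    replace (INR (S (S N))) with (INR N + 2) by (rewrite !S_INR; ring).
    replace (INR (S N) + 1) with (INR N + 2) by (rewrite S_INR; ring).
    replace (INR (S N) + 2) with (INR N + 2 + 1) by (rewrite S_INR; ring).
    replace (INR N + 2 - 1) with (INR N + 1) in * by ring.
    unfold Rdiv in *; lra.
Qed.

Lemma Series_nonneg_bounds (a : nat -> R) (M : R) :
  (forall n, 0 <= a n) -> (forall N, sum_n a N <= M) -> a 0%nat <= Series a <= M.
Proof.
  intros ha hM.
  assert (hinc : forall N, sum_n a N <= sum_n a (S N)).
  { intros N; rewrite sum_Sn; change plus with Rplus; pose proof (ha (S N)); lra. }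
  assert (hlow : forall N, a 0%nat <= sum_n a N).
  { induction N as [|N IH]; [rewrite sum_O; lra | pose proof (hinc N); lra]. }
  destruct (ex_finite_lim_seq_incr _ _ hinc hM) as [l Hl].
  replace (Series a) with l by (unfold Series; now rewrite (is_lim_seq_unique _ _ Hl)).
  split.
  - exact (is_lim_seq_le _ _ _ _ hlow (is_lim_seq_const _) Hl).
  - exact (is_lim_seq_le _ _ _ _ hM Hl (is_lim_seq_const _)).
Qed.

Lemma zeta_bounds (s : R) : 3 <= s -> 1 <= zeta s <= 1 + Rpower 2 (1 - s).
Proof.
  intros hs.
  assert (Etwo : Rpower 2 (1 - s) = 2 / Rpower 2 s).
  { unfold Rminus; rewrite Rpower_plus, Rpower_1, Rpower_Ropp by lra; reflexivity. }
  assert (hnonneg : forall n, 0 <= / Rpower (INR (S n)) s).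
  { intros n; left; apply Rinv_0_lt_compat, Rpower_gt_0. }
  destruct (Series_nonneg_bounds _ (1 + Rpower 2 (1 - s)) hnonneg) as [hlo hhi].
  - intros N; rewrite Etwo.
    pose proof (zeta_partial_sum_le s N hs); pose proof (pos_INR N).
    assert (0 <= 4 / Rpower 2 s / ((INR N + 1) * (INR N + 2))).
    { pose proof (Rpower_gt_0 2 s).
      unfold Rdiv; apply Rmult_le_pos; [apply Rmult_le_pos|]; left;
        try apply Rinv_0_lt_compat; nra. }
    lra.
  - replace (/ Rpower (INR 1) s) with 1 in hlo
      by (simpl INR; now rewrite Rpower_1_l, Rinv_1).
    unfold zeta; lra.
Qed.

Theorem lemma2p3 (s : R) (hs : 3 <= s) : ln (zeta s) <= Rpower 2 (1 - s).
Proof.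
  destruct (zeta_bounds s hs) as [hlo hhi].
  rewrite <- (ln_exp (Rpower 2 (1 - s))).
  apply ln_le; [lra|].
  pose proof (exp_ineq1_le (Rpower 2 (1 - s))); lra.
Qed.
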